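(* For $i\ge1$ let $x_i=(1+\alpha)\Gamma(2+\alpha)\frac{\Gamma(i)}{\Gamma(2+\alpha+i)}$, $\alpha=k/\lambda$, and set $x_0=0$. Then for all $i,j\ge1$, as $n\to\infty$, $$x^{(n)}_i=x_i+O(n^{-1}),\qquad (nk)^{-2}\mathbf E X^{(n)}_iX^{(n)}_j=x_ix_j+O(n^{-1}).$$ Moreover, for all $i,j\ge1$ the finite limits $h_{i,j}=\lim_{n\to\infty}h^{(n)}_{i,j}$ exist; they are symmetric ($h_{i,j}=h_{j,i}$) and, with the convention $h_{i,j}=0$ when $\min\{i,j\}=0$, satisfy $$h_{i,i}=\frac{2(i-1)h_{i,i-1}+ix_i+(i-1)x_{i-1}}{2i+1+\alpha},\qquad h_{i,i+1}=\frac{(i-1)h_{i-1,i+1}+ih_{i,i}-ix_i}{2i+2+\alpha},$$ $$h_{i,r}=\frac{(i-1)h_{i-1,r}+(r-1)h_{i,r-1}}{i+r+1+\alpha},\qquad r\ge i+2.$$ In particular, for all $i,j\ge1$, $$(nk)^{-2}\mathbf E X^{(n)}_iX^{(n)}_j=x^{(n)}_ix^{(n)}_j+h_{i,j}(nk)^{-1}+o(n^{-1}).$$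
   Context: Preferred attachment affiliation model. Fix a real $\lambda>0$, an integer $k\ge 1$ and an integer $l\ge 0$ with $\lambda\le k+l$. At time $0$ a library contains books $w_1,\dots,w_l$, each with score $1$. For $n=0,1,2,\dots$, step $n+1$ proceeds as follows: $k$ new books $w_{l+nk+1},\dots,w_{l+(n+1)k}$ arrive, each with score $1$; then a customer $v_{n+1}$ arrives and, conditionally on the past and independently over books, downloads each book $w\in W_{n+1}=\{w_1,\dots,w_{l+(n+1)k}\}$ with probability $p_{n+1,s(w)}=\lambda s(w)/(l+(n+1)k+n\lambda)$, where $s(w)$ is the current score of $w$. Every book downloaded by $v_{n+1}$ then has its score increased by $1$. $W_n=\{w_1,\dots,w_{l+nk}\}$ and $s_n(w)$ denotes the score of $w$ after step $n$. $X^{(n)}_i$ is the number of books $w\in W_n$ with $s_n(w)=i$. Define $x^{(n)}_i=(nk)^{-1}\mathbf E X^{(n)}_i$ and $h^{(n)}_{i,j}=(nk)^{-1}\big(\mathbf E X^{(n)}_iX^{(n)}_j-\mathbf E X^{(n)}_i\,\mathbf E X^{(n)}_j\big)$. *)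

From Stdlib Require Import Reals List Arith.
Open Scope R_scope.

(* A state = list of current scores of the books w_1, ..., w_{|W|} (in order). *)

(* Exact expectation of g(new state) when each book of score s is
   independently downloaded (score s -> s+1) with probability p s. *)
Fixpoint indep_exp (p : nat -> R) (st : list nat) (g : list nat -> R) : R :=
  match st with
  | nil => g nil
  | s :: st' =>
      p s * indep_exp p st' (fun t => g (S s :: t))
      + (1 - p s) * indep_exp p st' (fun t => g (s :: t))
  end.

(* Step n+1 from the state after step n: k new books of score 1 arrive,
   then customer v_{n+1} downloads each book w independently with
   probability lam * s(w) / (l + (n+1) k + n lam). *)
Definition step_exp (lam : R) (k l n : nat) (st : list nat) (f : list nat -> R) : R :=
  indep_exp (fun s => lam * INR s / (INR (l + (n + 1) * k) + INR n * lam))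
            (st ++ repeat 1%nat k) f.

(* Ex lam k l n f = E f(state after step n); at time 0 the state is l books of score 1. *)
Fixpoint Ex (lam : R) (k l n : nat) (f : list nat -> R) : R :=
  match n with
  | O => f (repeat 1%nat l)
  | S m => Ex lam k l m (fun st => step_exp lam k l m st f)
  end.

Definition Xcount (i : nat) (st : list nat) : R :=
  INR (count_occ Nat.eq_dec st i).

Definition xn (lam : R) (k l i n : nat) : R :=
  / (INR n * INR k) * Ex lam k l n (Xcount i).

Definition mom2 (lam : R) (k l i j n : nat) : R :=
  / (INR n * INR k) ^ 2 * Ex lam k l n (fun st => Xcount i st * Xcount j st).

Definition hn (lam : R) (k l i j n : nat) : R :=
  / (INR n * INR k) *
  (Ex lam k l n (fun st => Xcount i st * Xcount j st)
   - Ex lam k l n (Xcount i) * Ex lam k l n (Xcount j)).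

(* rising product: rprod a i = a (a+1) ... (a+i-1) = Gamma(a+i)/Gamma(a) *)
Fixpoint rprod (a : R) (i : nat) : R :=
  match i with
  | O => 1
  | S m => rprod a m * (a + INR m)
  end.

(* x_i = (1+alpha) Gamma(2+alpha) Gamma(i) / Gamma(2+alpha+i) for i >= 1, x_0 = 0,
   written via Gamma(i) = (i-1)! and Gamma(2+alpha+i)/Gamma(2+alpha) = rprod (2+alpha) i. *)
Definition xlim (alpha : R) (i : nat) : R :=
  match i with
  | O => 0
  | S m => (1 + alpha) * INR (fact m) / rprod (2 + alpha) i
  end.

(* All expectations are computed exactly.  One step of the model acts on
   the vector of score counts linearly: writing q_n(s) for the download
   probability of a book of score s at step n+1, and X_m for the number of
   books of score m,
     E[X'_{m+1} | past] = (1 - q_n(m+1)) X_{m+1} + q_n(m) X_m + k [m = 0],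
   and the conditional covariance of X'_{i+1}, X'_{j+1} is a sum of Bernoulli
   variances.  Taking expectations gives linear recursions in n for the
   means E X^{(n)}_m and the covariances Cov(X^{(n)}_i, X^{(n)}_j) whose
   coefficients satisfy n q_n(s) -> s kappa with kappa = lam / (k + lam) =
   1 / (1 + alpha).

   It then proves two general facts on scalar recursions
   c_{n+1} = rho_n c_n + r_n with n (1 - rho_n) -> a: c_n / n converges to
   lim r / (1 + a), and c_n - n lim r / (1 + a) stays bounded when the
   coefficients converge at rate O(1/n).  Induction on m gives the means,
   induction on i + j gives the covariances together with the recursion
   satisfied by their limits h_{i,j} (defined as limits, by choice); the
   theorem is then assembled. *)

From Stdlib Require Import Reals List Arith Lra Lia ClassicalEpsilon.
Open Scope R_scope.

Definition kdelta (a b : nat) : R := if Nat.eq_dec a b then 1 else 0.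

Lemma kdelta_SS a b : kdelta (S a) (S b) = kdelta a b.
Proof. unfold kdelta; destruct (Nat.eq_dec (S a) (S b)), (Nat.eq_dec a b); lia || reflexivity. Qed.

Lemma kdelta_refl a : kdelta a a = 1.
Proof. unfold kdelta; destruct Nat.eq_dec; [reflexivity | lia]. Qed.

Lemma kdelta_neq a b : a <> b -> kdelta a b = 0.
Proof. intro; unfold kdelta; destruct Nat.eq_dec; [lia | reflexivity]. Qed.

Lemma kdelta_subst (f : nat -> R) a b : f a * kdelta a b = f b * kdelta a b.
Proof. unfold kdelta; destruct (Nat.eq_dec a b); [subst; reflexivity | ring]. Qed.

Lemma Xcount_cons i s t : Xcount i (s :: t) = kdelta s i + Xcount i t.
Proof. unfold Xcount, kdelta; simpl; destruct (Nat.eq_dec s i); [rewrite S_INR |]; lra. Qed.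

Lemma Xcount_app i a b : Xcount i (a ++ b) = Xcount i a + Xcount i b.
Proof.
  induction a as [|s a IH]; simpl; [unfold Xcount at 2; simpl; ring |].
  rewrite !Xcount_cons, IH; ring.
Qed.

Lemma Xcount_new i k : Xcount i (repeat 1%nat k) = INR k * kdelta 1 i.
Proof.
  induction k as [|k IH]; [unfold Xcount; simpl; ring |].
  change (repeat 1%nat (S k)) with (1%nat :: repeat 1%nat k).
  rewrite Xcount_cons, IH, S_INR; ring.
Qed.

Section IndependentRound.
Variable p : nat -> R.

Lemma indep_exp_ext st f g :
  (forall t, f t = g t) -> indep_exp p st f = indep_exp p st g.
Proof.
  revert f g; induction st as [|s st IH]; intros f g H; simpl; [apply H |].
  rewrite (IH (fun t => f (S s :: t)) (fun t => g (S s :: t))),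
          (IH (fun t => f (s :: t)) (fun t => g (s :: t))) by (intro; apply H).
  reflexivity.
Qed.

Lemma indep_exp_add st f g :
  indep_exp p st (fun t => f t + g t) = indep_exp p st f + indep_exp p st g.
Proof.
  revert f g; induction st as [|s st IH]; intros f g; simpl; [reflexivity |].
  rewrite (IH (fun t => f (S s :: t))), (IH (fun t => f (s :: t))); ring.
Qed.

Lemma indep_exp_scal st c f :
  indep_exp p st (fun t => c * f t) = c * indep_exp p st f.
Proof.
  revert f; induction st as [|s st IH]; intros f; simpl; [reflexivity |].
  rewrite (IH (fun t => f (S s :: t))), (IH (fun t => f (s :: t))); ring.
Qed.

Lemma indep_exp_const st c : indep_exp p st (fun _ => c) = c.
Proof. induction st as [|s st IH]; simpl; [| rewrite IH]; ring. Qed.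

Lemma indep_exp_addc st c f :
  indep_exp p st (fun t => c + f t) = c + indep_exp p st f.
Proof. rewrite indep_exp_add, indep_exp_const; reflexivity. Qed.

Fixpoint round_mean (st : list nat) (i : nat) : R :=
  match st with
  | nil => 0
  | s :: t => (1 - p s) * kdelta s i + p s * kdelta (S s) i + round_mean t i
  end.

Fixpoint round_cov (st : list nat) (i j : nat) : R :=
  match st with
  | nil => 0
  | s :: t => p s * (1 - p s) * (kdelta (S s) i - kdelta s i)
                * (kdelta (S s) j - kdelta s j) + round_cov t i j
  end.

Lemma indep_exp_Xcount st i : indep_exp p st (Xcount i) = round_mean st i.
Proof.
  induction st as [|s st IH]; simpl; [reflexivity |].
  rewrite (indep_exp_ext _ (fun t => Xcount i (S s :: t)) (fun t => kdelta (S s) i + Xcount i t)),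
          (indep_exp_ext _ (fun t => Xcount i (s :: t)) (fun t => kdelta s i + Xcount i t))
    by (intro; apply Xcount_cons).
  rewrite !indep_exp_addc, IH; ring.
Qed.

Lemma indep_exp_XX st i j :
  indep_exp p st (fun t => Xcount i t * Xcount j t)
  = round_mean st i * round_mean st j + round_cov st i j.
Proof.
  induction st as [|s st IH]; simpl; [unfold Xcount; simpl; ring |].
  assert (Hexp : forall a t, Xcount i (a :: t) * Xcount j (a :: t)
            = kdelta a i * kdelta a j + (kdelta a i * Xcount j t
              + (kdelta a j * Xcount i t + Xcount i t * Xcount j t)))
    by (intros; rewrite !Xcount_cons; ring).
  rewrite (indep_exp_ext _ _ _ (Hexp (S s))), (indep_exp_ext _ _ _ (Hexp s)).
  rewrite !indep_exp_addc, !indep_exp_add, !indep_exp_scal, IH, !indep_exp_Xcount; ring.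
Qed.

Lemma round_mean_S st m :
  round_mean st (S m) = (1 - p (S m)) * Xcount (S m) st + p m * Xcount m st.
Proof.
  induction st as [|s st IH]; simpl; [unfold Xcount; simpl; ring |].
  rewrite IH, !Xcount_cons, kdelta_SS,
          (kdelta_subst (fun s => 1 - p s) s (S m)), (kdelta_subst p s m); ring.
Qed.

Lemma round_mean_0 st : p 0%nat = 0 -> round_mean st 0 = Xcount 0 st.
Proof.
  intro H; induction st as [|s st IH]; simpl; [reflexivity |].
  rewrite IH, Xcount_cons, (kdelta_subst (fun s => 1 - p s) s 0); simpl.
  unfold kdelta at 2; simpl; rewrite H; ring.
Qed.

Lemma round_cov_SS st i j :
  round_cov st (S i) (S j)
  = p i * (1 - p i) * Xcount i st * (kdelta i j - kdelta i (S j))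
  + p (S i) * (1 - p (S i)) * Xcount (S i) st * (kdelta (S i) (S j) - kdelta (S i) j).
Proof.
  induction st as [|s st IH]; simpl; [unfold Xcount; simpl; ring |].
  rewrite IH, !Xcount_cons, !kdelta_SS.
  unfold kdelta; repeat destruct Nat.eq_dec; subst; try lia; ring.
Qed.

End IndependentRound.

Definition ev_bounded (u : nat -> R) : Prop :=
  exists K N, forall n, (N <= n)%nat -> Rabs (u n) <= K.

Definition bigO_inv (u : nat -> R) : Prop := ev_bounded (fun n => INR n * u n).

Lemma INR_eventually_gt (x : R) : exists N : nat, forall n, (N <= n)%nat -> x < INR n.
Proof.
  destruct (INR_unbounded x) as [N HN]; exists N; intros n Hn.
  apply le_INR in Hn; lra.
Qed.

Lemma ev_bounded_ext u v :
  (exists N, forall n, (N <= n)%nat -> u n = v n) -> ev_bounded u -> ev_bounded v.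
Proof.
  intros [N0 E] [K [N H]]; exists K, (max N0 N); intros n Hn.
  rewrite <- E by lia; apply H; lia.
Qed.

Lemma bigO_inv_ext u v : (forall n, u n = v n) -> bigO_inv u -> bigO_inv v.
Proof. intro E; apply ev_bounded_ext; exists 0%nat; intros n _; rewrite E; reflexivity. Qed.

Lemma ev_bounded_add u v :
  ev_bounded u -> ev_bounded v -> ev_bounded (fun n => u n + v n).
Proof.
  intros [K1 [N1 H1]] [K2 [N2 H2]]; exists (K1 + K2), (max N1 N2); intros n Hn.
  pose proof (H1 n ltac:(lia)); pose proof (H2 n ltac:(lia)).
  pose proof (Rabs_triang (u n) (v n)); lra.
Qed.

Lemma ev_bounded_mul u v :
  ev_bounded u -> ev_bounded v -> ev_bounded (fun n => u n * v n).
Proof.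
  intros [K1 [N1 H1]] [K2 [N2 H2]]; exists (K1 * K2), (max N1 N2); intros n Hn.
  rewrite Rabs_mult; apply Rmult_le_compat; auto using Rabs_pos; [apply H1 | apply H2]; lia.
Qed.

Lemma ev_bounded_const c : ev_bounded (fun _ => c).
Proof. exists (Rabs c), 0%nat; intros; lra. Qed.

Lemma cv_ev_bounded u L : Un_cv u L -> ev_bounded u.
Proof.
  intro H; destruct (H 1 Rlt_0_1) as [N HN]; exists (Rabs L + 1), N; intros n Hn.
  specialize (HN n Hn); unfold R_dist in HN.
  pose proof (Rabs_triang_inv (u n) L); lra.
Qed.

Lemma bigO_inv_add u v : bigO_inv u -> bigO_inv v -> bigO_inv (fun n => u n + v n).
Proof.
  intros H1 H2; eapply ev_bounded_ext; [| apply (ev_bounded_add _ _ H1 H2)].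
  exists 0%nat; intros; simpl; ring.
Qed.

Lemma bigO_inv_mul b u : ev_bounded b -> bigO_inv u -> bigO_inv (fun n => b n * u n).
Proof.
  intros H1 H2; eapply ev_bounded_ext; [| apply (ev_bounded_mul _ _ H1 H2)].
  exists 0%nat; intros; simpl; ring.
Qed.

Lemma bigO_inv_scal c u : bigO_inv u -> bigO_inv (fun n => c * u n).
Proof. intro; apply bigO_inv_mul; auto using ev_bounded_const. Qed.

Lemma bigO_inv_ev_bounded u : bigO_inv u -> ev_bounded u.
Proof.
  intros [K [N H]]; exists (Rabs K), (max N 1); intros n Hn.
  pose proof (H n ltac:(lia)) as Hb.
  assert (1 <= INR n) by (apply (le_INR 1); lia).
  rewrite Rabs_mult, Rabs_right in Hb by lra.
  pose proof (Rle_abs K); pose proof (Rabs_pos (u n)); nra.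
Qed.

Lemma bigO_inv_rate u :
  bigO_inv u -> exists C N : R, forall n : nat, N <= INR n -> Rabs (u n) <= C / INR n.
Proof.
  intros [K [N H]]; exists K, (INR (max N 1)); intros n Hn.
  apply INR_le in Hn; assert (Hn1 : 1 <= INR n) by (apply (le_INR 1); lia).
  specialize (H n ltac:(lia)); rewrite Rabs_mult, Rabs_right in H by lra.
  apply (Rmult_le_reg_l (INR n)); [lra |].
  replace (INR n * (K / INR n)) with K by (field; lra); exact H.
Qed.

Lemma bigO_inv_cv u : bigO_inv u -> Un_cv u 0.
Proof.
  intros [K [N H]] eps He.
  destruct (INR_eventually_gt (Rabs K / eps)) as [N2 H2].
  exists (max (max N N2) 1); intros n Hn; unfold R_dist; rewrite Rminus_0_r.
  pose proof (H n ltac:(lia)) as Hb; pose proof (H2 n ltac:(lia)) as Hn2.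
  assert (0 < INR n) by (apply lt_0_INR; lia).
  rewrite Rabs_mult, Rabs_right in Hb by lra.
  assert (Rabs K / eps * eps = Rabs K) by (field; lra).
  pose proof (Rle_abs K); nra.
Qed.

Lemma cv_ext_ev u v L :
  (exists N, forall n, (N <= n)%nat -> u n = v n) -> Un_cv u L -> Un_cv v L.
Proof.
  intros [N HN] H eps He; destruct (H eps He) as [N1 H1].
  exists (max N N1); intros n Hn; rewrite <- HN by lia; apply H1; lia.
Qed.

Lemma cv_eq u v L L' : Un_cv u L -> (forall n, u n = v n) -> L = L' -> Un_cv v L'.
Proof. intros H E <-; eapply cv_ext_ev; [| exact H]; exists 0%nat; auto. Qed.

Lemma cv_const c : Un_cv (fun _ => c) c.
Proof. intros eps He; exists 0%nat; intros; unfold R_dist; rewrite Rminus_diag, Rabs_R0; lra. Qed.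

Lemma cv_scal c u L : Un_cv u L -> Un_cv (fun n => c * u n) (c * L).
Proof. intro H; apply CV_mult; auto using cv_const. Qed.

Lemma increments_o_n (e eps : nat -> R) (N0 : nat) :
  (forall n, (N0 <= n)%nat -> Rabs (e (S n)) <= Rabs (e n) + Rabs (eps n)) ->
  Un_cv eps 0 -> Un_cv (fun n => e n / INR n) 0.
Proof.
  intros Hrec Hcv ep Hep.
  destruct (Hcv (ep / 2) ltac:(lra)) as [N1 H1].
  set (M := max N0 N1).
  assert (Hgrowth : forall m, Rabs (e (M + m)%nat) <= Rabs (e M) + INR m * (ep / 2)).
  { induction m as [|m IH]; [rewrite Nat.add_0_r; simpl; lra |].
    rewrite Nat.add_succ_r.
    pose proof (Hrec (M + m)%nat ltac:(unfold M; lia)).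
    pose proof (H1 (M + m)%nat ltac:(unfold M; lia)) as Hq.
    unfold R_dist in Hq; rewrite Rminus_0_r in Hq; rewrite S_INR; lra. }
  destruct (INR_eventually_gt (2 * Rabs (e M) / ep)) as [N2 H2].
  exists (max (max M N2) 1); intros n Hn; unfold R_dist; rewrite Rminus_0_r.
  assert (Hn0 : 0 < INR n) by (apply lt_0_INR; lia).
  pose proof (H2 n ltac:(lia)) as H3.
  replace n with (M + (n - M))%nat in * by lia.
  specialize (Hgrowth (n - M)%nat); set (m := (n - M)%nat) in *.
  unfold Rdiv; rewrite Rabs_mult, Rabs_inv, (Rabs_right (INR (M + m))) by lra.
  rewrite plus_INR in *.
  assert (2 * Rabs (e M) / ep * ep = 2 * Rabs (e M)) by (field; lra).
  pose proof (pos_INR M).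
  apply (Rmult_lt_reg_r (INR M + INR m)); [lra |].
  rewrite Rmult_assoc, Rinv_l by lra; nra.
Qed.

Lemma linrec_limit (c rho r : nat -> R) (a R0 : R) :
  0 < 1 + a ->
  (exists N, forall n, (N <= n)%nat -> c (S n) = rho n * c n + r n /\ Rabs (rho n) <= 1) ->
  Un_cv (fun n => INR n * (rho n - 1)) (- a) -> Un_cv r R0 ->
  Un_cv (fun n => c n / INR n) (R0 / (1 + a)).
Proof.
  intros Ha [N HN] Hrho Hr; set (L := R0 / (1 + a)).
  (* e_n = c_n - L n satisfies e_{n+1} = rho_n e_n + eps_n with eps_n -> 0 *)
  set (e := fun n => c n - L * INR n).
  set (eps := fun n => L * (INR n * (rho n - 1) - 1) + r n).
  assert (He : forall n, (N <= n)%nat -> Rabs (e (S n)) <= Rabs (e n) + Rabs (eps n)).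
  { intros n Hn; destruct (HN n Hn) as [Hc Hb].
    assert (e (S n) = rho n * e n + eps n) as -> by (unfold e, eps; rewrite Hc, S_INR; ring).
    pose proof (Rabs_triang (rho n * e n) (eps n)) as T; rewrite Rabs_mult in T.
    pose proof (Rabs_pos (e n)); nra. }
  assert (Heps : Un_cv eps 0).
  { replace 0 with (L * (- a - 1) + R0) by (unfold L; field; lra).
    apply CV_plus; auto; apply cv_scal, CV_minus; auto using cv_const. }
  pose proof (CV_plus _ _ _ _ (increments_o_n e eps N He Heps) (cv_const L)) as H.
  rewrite Rplus_0_l in H; eapply cv_ext_ev; [| exact H].
  exists 1%nat; intros n Hn; assert (0 < INR n) by (apply lt_0_INR; lia).
  unfold e; field; lra.
Qed.

Lemma contracted_errors_bounded (e g : nat -> R) (a K : R) (N : nat) :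
  0 < a -> 0 <= K ->
  (forall n, (N <= n)%nat -> 1 <= INR n /\ 0 <= g n <= 1 /\ a / 2 <= INR n * g n /\
     Rabs (e (S n)) <= (1 - g n) * Rabs (e n) + K / INR n) ->
  ev_bounded e.
Proof.
  intros Ha HK Hstep; set (B := Rmax (Rabs (e N)) (2 * K / a)).
  assert (HB : 2 * K / a <= B) by apply Rmax_r.
  assert (HB0 : 0 <= B) by (apply Rle_trans with (Rabs (e N)); [apply Rabs_pos | apply Rmax_l]).
  assert (Hall : forall m, Rabs (e (N + m)%nat) <= B).
  { induction m as [|m IH]; [rewrite Nat.add_0_r; apply Rmax_l |].
    rewrite Nat.add_succ_r; destruct (Hstep (N + m)%nat ltac:(lia)) as (Hn & Hg & Hng & He).
    set (n := (N + m)%nat) in *.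
    (* the perturbation K/n is dominated by the contraction g_n B *)
    assert (K / INR n <= g n * B).
    { apply (Rmult_le_reg_l (INR n)); [lra |].
      replace (INR n * (K / INR n)) with K by (field; lra).
      assert (2 * K / a * a = 2 * K) by (field; lra); nra. }
    assert ((1 - g n) * Rabs (e n) <= (1 - g n) * B) by (apply Rmult_le_compat_l; lra).
    lra. }
  exists B, N; intros n Hn; replace n with (N + (n - N))%nat by lia; apply Hall.
Qed.

Lemma linrec_rate (c g r : nat -> R) (a R0 : R) :
  0 < a ->
  (exists N, forall n, (N <= n)%nat -> c (S n) = (1 - g n) * c n + r n /\ 0 <= g n <= 1) ->
  bigO_inv (fun n => INR n * g n - a) -> bigO_inv (fun n => r n - R0) ->
  ev_bounded (fun n => c n - R0 / (1 + a) * INR n).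
Proof.
  intros Ha [N1 Hrec] Hg Hr; set (L := R0 / (1 + a)).
  (* e_{n+1} = (1 - g_n) e_n + d_n with d = O(1/n) *)
  set (d := fun n => L * (a - INR n * g n) + (r n - R0)).
  assert (Hd : bigO_inv d).
  { apply bigO_inv_add; auto.
    eapply bigO_inv_ext; [| apply (bigO_inv_scal (- L) _ Hg)]; intro; unfold d; ring. }
  destruct Hd as [K [N2 HK]].
  destruct (bigO_inv_cv _ Hg (a / 2) ltac:(lra)) as [N3 Hg2].
  apply (contracted_errors_bounded _ g a (Rabs K) (max (max N1 N2) (max N3 1)));
    auto using Rabs_pos.
  intros n Hn; destruct (Hrec n ltac:(lia)) as [Hc Hgb].
  assert (Hn1 : 1 <= INR n) by (apply (le_INR 1); lia).
  pose proof (HK n ltac:(lia)) as Hk; rewrite Rabs_mult, (Rabs_right (INR n)) in Hk by lra.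
  pose proof (Hg2 n ltac:(lia)) as Hg3; unfold R_dist in Hg3; rewrite Rminus_0_r in Hg3.
  pose proof (Rle_abs (- (INR n * g n - a))) as Hab; rewrite Rabs_Ropp in Hab.
  repeat split; try lra.
  assert (c (S n) - L * INR (S n) = (1 - g n) * (c n - L * INR n) + d n) as ->.
  { unfold d, L; rewrite Hc, S_INR; field; lra. }
  assert (Rabs (d n) <= Rabs K / INR n).
  { apply (Rmult_le_reg_l (INR n)); [lra |].
    replace (INR n * (Rabs K / INR n)) with (Rabs K) by (field; lra).
    pose proof (Rle_abs K); lra. }
  pose proof (Rabs_triang ((1 - g n) * (c n - L * INR n)) (d n)) as T.
  rewrite Rabs_mult, (Rabs_right (1 - g n)) in T by lra; lra.
Qed.

Lemma rprod_pos a n : 0 < a -> 0 < rprod a n.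
Proof.
  intro Ha; induction n as [|n IH]; simpl; [lra |].
  pose proof (pos_INR n); apply Rmult_lt_0_compat; lra.
Qed.

(* The limiting proportions x_m solve the first-moment fixed-point equations
   x_{m+1} (1 + (m+1)/(1+a)) = [m = 0] + m x_m / (1+a). *)
Lemma xlim_step a m : 0 < a ->
  kdelta 1 (S m) + INR m / (1 + a) * xlim a m = (1 + INR (S m) / (1 + a)) * xlim a (S m).
Proof.
  intro Ha; destruct m as [|p].
  - unfold kdelta; simpl; field; lra.
  - rewrite kdelta_neq by lia; unfold xlim.
    change (rprod (2 + a) (S (S p))) with (rprod (2 + a) (S p) * (2 + a + INR (S p))).
    change (fact (S p)) with ((S p) * fact p)%nat; rewrite mult_INR.
    pose proof (rprod_pos (2 + a) (S p) ltac:(lra)); pose proof (pos_INR p).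
    rewrite !S_INR; field; repeat split; lra.
Qed.

Lemma eq_div_of_mul (h D r : R) : D <> 0 -> h * D = r -> h = r / D.
Proof. intros HD <-; field; exact HD. Qed.

Section Model.
Variables (lam : R) (k l : nat).

Definition dprob (n s : nat) : R :=
  lam * INR s / (INR (l + (n + 1) * k) + INR n * lam).

Lemma dprob_0 n : dprob n 0 = 0.
Proof. unfold dprob; simpl; unfold Rdiv; ring. Qed.

Lemma Ex_S n f :
  Ex lam k l (S n) f = Ex lam k l n (fun st => indep_exp (dprob n) (st ++ repeat 1%nat k) f).
Proof. reflexivity. Qed.

Lemma Ex_ext n f g : (forall st, f st = g st) -> Ex lam k l n f = Ex lam k l n g.
Proof.
  revert f g; induction n as [|n IH]; intros f g H; [apply H |].
  rewrite !Ex_S; apply IH; intro st; apply indep_exp_ext; intro; apply H.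
Qed.

Lemma Ex_add n f g : Ex lam k l n (fun st => f st + g st) = Ex lam k l n f + Ex lam k l n g.
Proof.
  revert f g; induction n as [|n IH]; intros f g; [reflexivity |].
  rewrite !Ex_S, <- IH; apply Ex_ext; intro st; apply indep_exp_add.
Qed.

Lemma Ex_scal n c f : Ex lam k l n (fun st => c * f st) = c * Ex lam k l n f.
Proof.
  revert f; induction n as [|n IH]; intros f; [reflexivity |].
  rewrite !Ex_S, <- IH; apply Ex_ext; intro st; apply indep_exp_scal.
Qed.

Lemma Ex_const n c : Ex lam k l n (fun _ => c) = c.
Proof.
  induction n as [|n IH]; [reflexivity |].
  rewrite Ex_S; transitivity (Ex lam k l n (fun _ => c)); [| exact IH].
  apply Ex_ext; intro st; apply indep_exp_const.
Qed.

Definition EX (n i : nat) : R := Ex lam k l n (Xcount i).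
Definition EXX (n i j : nat) : R := Ex lam k l n (fun st => Xcount i st * Xcount j st).
Definition CovX (n i j : nat) : R := EXX n i j - EX n i * EX n j.

Lemma step_mean n st m :
  round_mean (dprob n) (st ++ repeat 1%nat k) (S m)
  = (1 - dprob n (S m)) * Xcount (S m) st + (dprob n m * Xcount m st
    + ((1 - dprob n (S m)) * INR k * kdelta 1 (S m) + dprob n m * INR k * kdelta 1 m)).
Proof. rewrite round_mean_S, !Xcount_app, !Xcount_new; ring. Qed.

Lemma EX_step n m :
  EX (S n) (S m)
  = (1 - dprob n (S m)) * EX n (S m) + (dprob n m * EX n m
    + ((1 - dprob n (S m)) * INR k * kdelta 1 (S m) + dprob n m * INR k * kdelta 1 m)).
Proof.
  unfold EX; rewrite Ex_S.
  rewrite (Ex_ext _ _ (fun st => (1 - dprob n (S m)) * Xcount (S m) st + (dprob n m * Xcount m st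
    + ((1 - dprob n (S m)) * INR k * kdelta 1 (S m) + dprob n m * INR k * kdelta 1 m))))
    by (intro st; rewrite indep_exp_Xcount; apply step_mean).
  rewrite !Ex_add, !Ex_scal, !Ex_const; reflexivity.
Qed.

Lemma EX_0 n : EX n 0 = 0.
Proof.
  induction n as [|n IH]; unfold EX in *.
  - simpl; rewrite Xcount_new; unfold kdelta; simpl; ring.
  - rewrite Ex_S, <- IH; apply Ex_ext; intro st.
    rewrite indep_exp_Xcount, round_mean_0 by apply dprob_0.
    rewrite Xcount_app, Xcount_new; unfold kdelta; simpl; ring.
Qed.

Lemma Cov_affine n a b c u v a' b' c' u' v' :
  Ex lam k l n (fun st => (a * Xcount u st + (b * Xcount v st + c))
                          * (a' * Xcount u' st + (b' * Xcount v' st + c')))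
  - Ex lam k l n (fun st => a * Xcount u st + (b * Xcount v st + c))
    * Ex lam k l n (fun st => a' * Xcount u' st + (b' * Xcount v' st + c'))
  = a * a' * CovX n u u' + a * b' * CovX n u v' + b * a' * CovX n v u' + b * b' * CovX n v v'.
Proof.
  rewrite (Ex_ext _ _ (fun st => (a*a') * (Xcount u st * Xcount u' st)
     + ((a*b') * (Xcount u st * Xcount v' st) + ((b*a') * (Xcount v st * Xcount u' st)
     + ((b*b') * (Xcount v st * Xcount v' st) + ((a*c') * Xcount u st
     + ((b*c') * Xcount v st + ((c*a') * Xcount u' st + ((c*b') * Xcount v' st
     + c*c'))))))))) by (intro; ring).
  rewrite !Ex_add, !Ex_scal, !Ex_const; unfold CovX, EXX, EX; ring.
Qed.

(* Covariance recursion: the law of total covariance for one step. *)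
Lemma CovX_step n i j :
  let q := dprob n in
  CovX (S n) (S i) (S j) =
    (1 - q (S i)) * (1 - q (S j)) * CovX n (S i) (S j)
  + (1 - q (S i)) * q j * CovX n (S i) j
  + q i * (1 - q (S j)) * CovX n i (S j)
  + q i * q j * CovX n i j
  + (q i * (1 - q i) * (EX n i + INR k * kdelta 1 i) * (kdelta i j - kdelta i (S j))
     + q (S i) * (1 - q (S i)) * (EX n (S i) + INR k * kdelta 1 (S i))
       * (kdelta (S i) (S j) - kdelta (S i) j)).
Proof.
  intro q.
  set (mean := fun m st => (1 - q (S m)) * Xcount (S m) st + (q m * Xcount m st
     + ((1 - q (S m)) * INR k * kdelta 1 (S m) + q m * INR k * kdelta 1 m))).
  assert (HM : forall m, EX (S n) (S m) = Ex lam k l n (mean m)).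
  { intro m; unfold EX; rewrite Ex_S; apply Ex_ext; intro st.
    rewrite indep_exp_Xcount; apply step_mean. }
  (* second moment = E[product of conditional means] + E[conditional covariance] *)
  assert (HS : EXX (S n) (S i) (S j) =
    Ex lam k l n (fun st => mean i st * mean j st)
    + Ex lam k l n (fun st => (q i * (1 - q i) * (kdelta i j - kdelta i (S j))) * Xcount i st
      + ((q (S i) * (1 - q (S i)) * (kdelta (S i) (S j) - kdelta (S i) j)) * Xcount (S i) st
      + (q i * (1 - q i) * (INR k * kdelta 1 i) * (kdelta i j - kdelta i (S j))
      + q (S i) * (1 - q (S i)) * (INR k * kdelta 1 (S i)) * (kdelta (S i) (S j) - kdelta (S i) j))))).
  { unfold EXX; rewrite Ex_S, <- Ex_add; apply Ex_ext; intro st.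
    rewrite indep_exp_XX, !step_mean, round_cov_SS, !Xcount_app, !Xcount_new.
    unfold mean; fold q; ring. }
  pose proof (Cov_affine n (1 - q (S i)) (q i) ((1 - q (S i)) * INR k * kdelta 1 (S i)
     + q i * INR k * kdelta 1 i) (S i) i (1 - q (S j)) (q j)
     ((1 - q (S j)) * INR k * kdelta 1 (S j) + q j * INR k * kdelta 1 j) (S j) j) as Haff.
  unfold CovX at 1; rewrite HS, !HM.
  rewrite (Ex_add n (fun st => _ * Xcount i st)), (Ex_add n (fun st => _ * Xcount (S i) st)).
  rewrite !Ex_scal, Ex_const; fold (EX n i) (EX n (S i)); unfold mean; lra.
Qed.

Hypothesis hlam : 0 < lam.
Hypothesis hk : (1 <= k)%nat.

Local Notation alpha := (INR k / lam).

(* kappa = lim n dprob n 1, the asymptotic download rate per unit of score. *)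
Definition kappa : R := lam / (INR k + lam).

Lemma INR_k_ge1 : 1 <= INR k.
Proof. apply (le_INR 1); exact hk. Qed.

Lemma kappa_pos : 0 < kappa.
Proof. pose proof INR_k_ge1; unfold kappa; apply Rdiv_lt_0_compat; lra. Qed.

Lemma kappa_alpha : kappa = 1 / (1 + alpha).
Proof. pose proof INR_k_ge1; unfold kappa; field; lra. Qed.

Lemma dprob_denominator n :
  INR (l + (n + 1) * k) + INR n * lam = INR l + INR k + INR n * (INR k + lam).
Proof. rewrite plus_INR, mult_INR, plus_INR; simpl; ring. Qed.

Lemma dprob_nonneg n s : 0 <= dprob n s.
Proof.
  pose proof INR_k_ge1; pose proof (pos_INR l); pose proof (pos_INR n); pose proof (pos_INR s).
  unfold dprob; rewrite dprob_denominator; apply Rmult_le_pos; [nra |].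
  left; apply Rinv_0_lt_compat; nra.
Qed.

Lemma n_dprob_rate s : bigO_inv (fun n => INR n * dprob n s - INR s * kappa).
Proof.
  pose proof INR_k_ge1; pose proof (pos_INR l); pose proof (pos_INR s).
  set (K1 := lam * INR s * (INR l + INR k) / (INR k + lam)).
  assert (HK1 : 0 <= K1).
  { unfold K1, Rdiv; apply Rmult_le_pos; [repeat apply Rmult_le_pos; lra |].
    left; apply Rinv_0_lt_compat; lra. }
  exists (K1 / (INR k + lam)), 0%nat; intros n _.
  pose proof (pos_INR n); unfold dprob, kappa; rewrite dprob_denominator.
  set (D := INR l + INR k + INR n * (INR k + lam)).
  assert (HD : 0 < D) by (unfold D; nra).
  replace (INR n * (INR n * (lam * INR s / D) - INR s * (lam / (INR k + lam))))
    with (- K1 * (INR n / D)) by (unfold K1, D in *; field; lra).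
  assert (Hnd : 0 <= INR n / D <= / (INR k + lam)).
  { split; [apply Rmult_le_pos; [lra | left; apply Rinv_0_lt_compat; lra] |].
    apply (Rmult_le_reg_r D); [lra |].
    replace (INR n / D * D) with (INR n) by (field; lra).
    apply (Rmult_le_reg_l (INR k + lam)); [lra |].
    rewrite <- Rmult_assoc, Rinv_r by lra; unfold D; nra. }
  rewrite Rabs_mult, Rabs_Ropp, (Rabs_right K1), (Rabs_right (INR n / D)) by lra.
  unfold Rdiv at 2; apply Rmult_le_compat_l; lra.
Qed.

Lemma n_dprob_cv s : Un_cv (fun n => INR n * dprob n s) (INR s * kappa).
Proof.
  eapply cv_eq; [apply (CV_plus _ _ _ _ (bigO_inv_cv _ (n_dprob_rate s)) (cv_const (INR s * kappa)))
                | intro; simpl; ring | ring].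
Qed.

Lemma dprob_bigO_inv s : bigO_inv (fun n => dprob n s).
Proof.
  eapply ev_bounded_ext;
    [| apply (ev_bounded_add _ _ (bigO_inv_ev_bounded _ (n_dprob_rate s)) (ev_bounded_const (INR s * kappa)))].
  exists 0%nat; intros; simpl; ring.
Qed.

Lemma dprob_cv0 s : Un_cv (fun n => dprob n s) 0.
Proof. apply bigO_inv_cv, dprob_bigO_inv. Qed.

Lemma one_minus_dprob_cv s : Un_cv (fun n => 1 - dprob n s) 1.
Proof. eapply cv_eq; [apply (CV_minus _ _ _ _ (cv_const 1) (dprob_cv0 s)) | intro; reflexivity | ring]. Qed.

Lemma dprob_le1 s : exists N, forall n, (N <= n)%nat -> 0 <= dprob n s <= 1.
Proof.
  destruct (dprob_cv0 s 1 Rlt_0_1) as [N HN]; exists N; intros n Hn.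
  specialize (HN n Hn); unfold R_dist in HN; rewrite Rminus_0_r in HN.
  pose proof (Rle_abs (dprob n s)); pose proof (dprob_nonneg n s); lra.
Qed.

Lemma dprob_scaled_cv m (u : nat -> R) L :
  (m = 0%nat \/ Un_cv (fun n => u n / INR n) L) ->
  Un_cv (fun n => dprob n m * u n) (INR m * kappa * L).
Proof.
  intros [-> | H].
  - eapply cv_eq; [apply (cv_const 0) | intro; rewrite dprob_0; ring | simpl; ring].
  - eapply cv_ext_ev; [| apply (CV_mult _ _ _ _ (n_dprob_cv m) H)].
    exists 1%nat; intros n Hn; assert (0 < INR n) by (apply lt_0_INR; lia); field; lra.
Qed.


Local Notation x := (xlim alpha).

Lemma alpha_pos : 0 < alpha.
Proof. pose proof INR_k_ge1; apply Rdiv_lt_0_compat; lra. Qed.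

Lemma EX_error_bounded m : ev_bounded (fun n => EX n m - INR k * x m * INR n).
Proof.
  induction m as [|m IH].
  - eapply ev_bounded_ext; [| apply (ev_bounded_const 0)].
    exists 0%nat; intros n _; simpl; rewrite EX_0; ring.
  - set (a := INR (S m) * kappa).
    assert (Ha : 0 < a) by (apply Rmult_lt_0_compat; [apply lt_0_INR; lia | apply kappa_pos]).
    set (R0 := INR k * kdelta 1 (S m) + INR m * kappa * (INR k * x m)).
    assert (HR : R0 / (1 + a) = INR k * x (S m)).
    { pose proof (xlim_step alpha m alpha_pos) as Hx; pose proof alpha_pos; pose proof INR_k_ge1.
      assert (HR0 : R0 = (1 + a) * (INR k * x (S m))).
      { transitivity (INR k * (kdelta 1 (S m) + INR m / (1 + alpha) * x m)).
        - unfold R0; rewrite kappa_alpha; field; lra.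
        - rewrite Hx; unfold a; rewrite kappa_alpha; field; lra. }
      rewrite HR0; field; lra. }
    rewrite <- HR.
    apply (linrec_rate (fun n => EX n (S m)) (fun n => dprob n (S m))
      (fun n => dprob n m * EX n m + ((1 - dprob n (S m)) * INR k * kdelta 1 (S m)
                                     + dprob n m * INR k * kdelta 1 m))); auto.
    + destruct (dprob_le1 (S m)) as [N HN]; exists N; intros n Hn; split; auto.
      rewrite EX_step; ring.
    + apply n_dprob_rate.
    +
      apply bigO_inv_ext with (fun n => (INR k * x m) * (INR n * dprob n m - INR m * kappa)
        + ((EX n m - INR k * x m * INR n) * dprob n m
           + ((- INR k * kdelta 1 (S m)) * dprob n (S m) + (INR k * kdelta 1 m) * dprob n m))).
      { intro n; unfold R0; ring. }
      apply bigO_inv_add; [apply bigO_inv_scal, n_dprob_rate |].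
      apply bigO_inv_add; [apply bigO_inv_mul; [exact IH | apply dprob_bigO_inv] |].
      apply bigO_inv_add; apply bigO_inv_scal, dprob_bigO_inv.
Qed.

Lemma EX_scaled_bigO m : bigO_inv (fun n => EX n m / INR n - INR k * x m).
Proof.
  eapply ev_bounded_ext; [| apply (EX_error_bounded m)].
  exists 1%nat; intros n Hn; assert (0 < INR n) by (apply lt_0_INR; lia); field; lra.
Qed.

Lemma EX_cv m : Un_cv (fun n => EX n m / INR n) (INR k * x m).
Proof.
  eapply cv_eq; [apply (CV_plus _ _ _ _ (bigO_inv_cv _ (EX_scaled_bigO m)) (cv_const (INR k * x m)))
                | intro; simpl; ring | ring].
Qed.

Lemma xn_bigO i : bigO_inv (fun n => xn lam k l i n - x i).
Proof.
  pose proof INR_k_ge1.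
  eapply ev_bounded_ext; [| apply (bigO_inv_scal (/ INR k) _ (EX_scaled_bigO i))].
  exists 1%nat; intros n Hn; assert (0 < INR n) by (apply lt_0_INR; lia).
  unfold xn, EX; field; lra.
Qed.

Definition hlim (i j : nat) : R :=
  match i, j with
  | O, _ | _, O => 0
  | _, _ => epsilon (inhabits 0) (fun L => Un_cv (fun n => hn lam k l i j n) L)
  end.

Lemma hlim_spec i j L : (1 <= i)%nat -> (1 <= j)%nat ->
  Un_cv (fun n => hn lam k l i j n) L -> hlim i j = L.
Proof.
  intros Hi Hj H; destruct i as [|i]; [lia |]; destruct j as [|j]; [lia |].
  apply (UL_sequence (fun n => hn lam k l (S i) (S j) n)); auto.
  unfold hlim; apply epsilon_spec; exists L; exact H.
Qed.

Lemma hn_of_CovX i j L :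
  Un_cv (fun n => CovX n i j / INR n) L -> Un_cv (fun n => hn lam k l i j n) (L / INR k).
Proof.
  intro H; pose proof INR_k_ge1.
  eapply cv_ext_ev; [| eapply cv_eq; [exact (cv_scal (/ INR k) _ _ H) | intro; reflexivity | unfold Rdiv; ring]].
  exists 1%nat; intros n Hn; assert (0 < INR n) by (apply lt_0_INR; lia).
  unfold hn, CovX, EXX, EX; field; lra.
Qed.

Lemma cov_contraction_cv i j :
  Un_cv (fun n => INR n * ((1 - dprob n (S i)) * (1 - dprob n (S j)) - 1))
        (- ((INR (S i) + INR (S j)) * kappa)).
Proof.
  pose proof (n_dprob_cv (S i)) as Hi; pose proof (n_dprob_cv (S j)) as Hj.
  eapply cv_eq;
    [apply (CV_plus _ _ _ _ (CV_plus _ _ _ _ (CV_opp _ _ Hi) (CV_opp _ _ Hj))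
                            (CV_mult _ _ _ _ Hi (dprob_cv0 (S j))))
    | intro; unfold opp_seq; ring | ring].
Qed.

Lemma variance_source_cv m d :
  Un_cv (fun n => dprob n m * (1 - dprob n m) * (EX n m + INR k * kdelta 1 m) * d)
        (INR m * kappa * (INR k * x m) * d).
Proof.
  pose proof (dprob_scaled_cv m (fun n => EX n m) _ (or_intror (EX_cv m))) as Hm.
  pose proof (CV_plus _ _ _ _ Hm (cv_scal (INR k * kdelta 1 m) _ _ (dprob_cv0 m))) as Hs.
  eapply cv_eq; [apply (cv_scal d _ _ (CV_mult _ _ _ _ (one_minus_dprob_cv m) Hs)) | intro; cbv beta; ring | ring].
Qed.

Definition cov_asymptotics (i j : nat) : Prop :=
  Un_cv (fun n => CovX n (S i) (S j) / INR n) (INR k * hlim (S i) (S j)) /\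
  hlim (S i) (S j) * (INR (S i) + INR (S j) + 1 + alpha)
  = INR j * hlim (S i) j + INR i * hlim i (S j)
    + (INR i * x i * (kdelta i j - kdelta i (S j))
       + INR (S i) * x (S i) * (kdelta (S i) (S j) - kdelta (S i) j)).


Lemma lower_cov_terms_cv i j :
  (forall a b, (a + b < i + j)%nat -> cov_asymptotics a b) ->
  Un_cv (fun n => (1 - dprob n (S i)) * dprob n j * CovX n (S i) j
                  + dprob n i * (1 - dprob n (S j)) * CovX n i (S j)
                  + dprob n i * dprob n j * CovX n i j)
        (INR j * kappa * (INR k * hlim (S i) j) + INR i * kappa * (INR k * hlim i (S j))).
Proof.
  intro IH.
  assert (IH1 : j = 0%nat \/ Un_cv (fun n => CovX n (S i) j / INR n) (INR k * hlim (S i) j)).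
  { destruct j as [|j']; [left; reflexivity | right; apply (IH i j'); lia]. }
  assert (IH2 : i = 0%nat \/ Un_cv (fun n => CovX n i (S j) / INR n) (INR k * hlim i (S j))).
  { destruct i as [|i']; [left; reflexivity | right; apply (IH i' j); lia]. }
  assert (T1 : Un_cv (fun n => (1 - dprob n (S i)) * dprob n j * CovX n (S i) j)
                     (INR j * kappa * (INR k * hlim (S i) j))).
  { eapply cv_eq; [apply (CV_mult _ _ _ _ (one_minus_dprob_cv (S i)) (dprob_scaled_cv j _ _ IH1))
                  | intro; cbv beta; ring | ring]. }
  assert (T2 : Un_cv (fun n => dprob n i * (1 - dprob n (S j)) * CovX n i (S j))
                     (INR i * kappa * (INR k * hlim i (S j)))).
  { eapply cv_eq; [apply (CV_mult _ _ _ _ (one_minus_dprob_cv (S j)) (dprob_scaled_cv i _ _ IH2))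
                  | intro; cbv beta; ring | ring]. }
  assert (T3 : Un_cv (fun n => dprob n i * dprob n j * CovX n i j) 0).
  { destruct i as [|i']; [| destruct j as [|j']].
    1, 2: eapply cv_eq; [apply (cv_const 0) | intro n; rewrite dprob_0; ring | reflexivity].
    assert (IH3 : Un_cv (fun n => CovX n (S i') (S j') / INR n) (INR k * hlim (S i') (S j')))
      by (apply (IH i' j'); lia).
    eapply cv_eq; [apply (CV_mult _ _ _ _ (dprob_cv0 (S i')) (dprob_scaled_cv (S j') _ _ (or_intror IH3)))
                  | intro; cbv beta; ring | ring]. }
  eapply cv_eq; [apply (CV_plus _ _ _ _ (CV_plus _ _ _ _ T1 T2) T3) | reflexivity | ring].
Qed.

(* Induction step on i + j: the covariance recursion is a linear recursion
   whose source terms converge by the induction hypothesis. *)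
Lemma cov_step i j :
  (forall a b, (a + b < i + j)%nat -> cov_asymptotics a b) -> cov_asymptotics i j.
Proof.
  intro IH; pose proof INR_k_ge1; pose proof kappa_pos.
  set (d1 := kdelta i j - kdelta i (S j)); set (d2 := kdelta (S i) (S j) - kdelta (S i) j).
  set (a := (INR (S i) + INR (S j)) * kappa).
  assert (Ha : 0 < a) by (unfold a; rewrite !S_INR; pose proof (pos_INR i); pose proof (pos_INR j); nra).
  set (R0 := INR j * kappa * (INR k * hlim (S i) j) + INR i * kappa * (INR k * hlim i (S j))
             + (INR i * kappa * (INR k * x i) * d1 + INR (S i) * kappa * (INR k * x (S i)) * d2)).
  assert (Hlim : Un_cv (fun n => CovX n (S i) (S j) / INR n) (R0 / (1 + a))).
  { apply (linrec_limit _ (fun n => (1 - dprob n (S i)) * (1 - dprob n (S j)))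
      (fun n => (1 - dprob n (S i)) * dprob n j * CovX n (S i) j
        + dprob n i * (1 - dprob n (S j)) * CovX n i (S j) + dprob n i * dprob n j * CovX n i j
        + (dprob n i * (1 - dprob n i) * (EX n i + INR k * kdelta 1 i) * d1
           + dprob n (S i) * (1 - dprob n (S i)) * (EX n (S i) + INR k * kdelta 1 (S i)) * d2)));
      [lra | | apply cov_contraction_cv |].
    - destruct (dprob_le1 (S i)) as [Na Ha1]; destruct (dprob_le1 (S j)) as [Nb Hb1].
      exists (max Na Nb); intros n Hn.
      specialize (Ha1 n ltac:(lia)); specialize (Hb1 n ltac:(lia)); split.
      + rewrite CovX_step; unfold d1, d2; ring.
      + rewrite Rabs_right by (apply Rle_ge, Rmult_le_pos; lra); nra.
    - apply CV_plus; [apply (lower_cov_terms_cv i j IH) |].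
      apply CV_plus; apply variance_source_cv. }
  assert (Hh : hlim (S i) (S j) = R0 / (1 + a) / INR k)
    by (apply hlim_spec; [lia | lia | apply hn_of_CovX, Hlim]).
  split.
  - eapply cv_eq; [exact Hlim | intro; reflexivity | rewrite Hh; field; lra].
  - pose proof alpha_pos; pose proof (pos_INR i); pose proof (pos_INR j).
    rewrite Hh; unfold R0, a, d1, d2; rewrite kappa_alpha, !S_INR.
    field; repeat split; nra.
Qed.

Lemma cov_all i j : cov_asymptotics i j.
Proof.
  remember (i + j)%nat as s eqn:Hs; revert i j Hs.
  induction s as [s IHs] using (well_founded_induction lt_wf).
  intros i j Hs; apply cov_step; intros a b Hab; apply (IHs (a + b)%nat); lia.
Qed.

Lemma hn_cv i j : (1 <= i)%nat -> (1 <= j)%nat ->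
  Un_cv (fun n => hn lam k l i j n) (hlim i j).
Proof.
  intros Hi Hj; pose proof INR_k_ge1.
  destruct i as [|i]; [lia |]; destruct j as [|j]; [lia |].
  destruct (cov_all i j) as [Hc _].
  eapply cv_eq; [apply (hn_of_CovX _ _ _ Hc) | intro; reflexivity | field; lra].
Qed.

Lemma hlim_sym i j : hlim i j = hlim j i.
Proof.
  destruct i as [|i]; destruct j as [|j]; try reflexivity.
  apply hlim_spec; [lia | lia |].
  eapply cv_eq; [apply (hn_cv (S j) (S i)); lia | intro n; unfold hn | reflexivity].
  rewrite (Ex_ext n (fun st => Xcount (S j) st * Xcount (S i) st)
                    (fun st => Xcount (S i) st * Xcount (S j) st)) by (intro; ring).
  ring.
Qed.

Lemma hlim_diag i : (1 <= i)%nat ->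
  hlim i i = (2 * INR (i - 1) * hlim i (i - 1)%nat + INR i * x i
              + INR (i - 1) * x (i - 1)) / (2 * INR i + 1 + alpha).
Proof.
  intro Hi; destruct i as [|i]; [lia |]; replace (S i - 1)%nat with i by lia.
  pose proof alpha_pos; pose proof (pos_INR (S i)).
  destruct (cov_all i i) as [_ Hrec].
  rewrite kdelta_refl, kdelta_refl, kdelta_neq, kdelta_neq, (hlim_sym i (S i)) in Hrec by lia.
  apply eq_div_of_mul; [lra |].
  replace (2 * INR (S i) + 1 + alpha) with (INR (S i) + INR (S i) + 1 + alpha) by ring.
  rewrite Hrec; ring.
Qed.

Lemma hlim_super i : (1 <= i)%nat ->
  hlim i (i + 1)%nat = (INR (i - 1) * hlim (i - 1)%nat (i + 1)%nat + INR i * hlim i i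
                        - INR i * x i) / (2 * INR i + 2 + alpha).
Proof.
  intro Hi; destruct i as [|i]; [lia |]; replace (S i - 1)%nat with i by lia.
  replace (S i + 1)%nat with (S (S i)) by lia.
  pose proof alpha_pos; pose proof (pos_INR (S i)).
  destruct (cov_all i (S i)) as [_ Hrec].
  rewrite kdelta_refl, !kdelta_neq in Hrec by lia.
  apply eq_div_of_mul; [lra |].
  replace (2 * INR (S i) + 2 + alpha) with (INR (S i) + INR (S (S i)) + 1 + alpha)
    by (rewrite (S_INR (S i)); ring).
  rewrite Hrec; ring.
Qed.

Lemma hlim_far i r : (1 <= i)%nat -> (i + 2 <= r)%nat ->
  hlim i r = (INR (i - 1) * hlim (i - 1)%nat r + INR (r - 1) * hlim i (r - 1)%nat)
             / (INR i + INR r + 1 + alpha).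
Proof.
  intros Hi Hr; destruct i as [|i]; [lia |]; destruct r as [|r]; [lia |].
  replace (S i - 1)%nat with i by lia; replace (S r - 1)%nat with r by lia.
  pose proof alpha_pos; pose proof (pos_INR (S i)); pose proof (pos_INR (S r)).
  destruct (cov_all i r) as [_ Hrec].
  rewrite !kdelta_neq in Hrec by lia.
  apply eq_div_of_mul; [lra |]; rewrite Hrec; ring.
Qed.

Lemma mom2_decomp i j n : (1 <= n)%nat ->
  mom2 lam k l i j n = hn lam k l i j n / (INR n * INR k) + xn lam k l i n * xn lam k l j n.
Proof.
  intro Hn; pose proof INR_k_ge1; assert (1 <= INR n) by (apply (le_INR 1); lia).
  unfold mom2, hn, xn; field; lra.
Qed.

Lemma mom2_bigO i j : (1 <= i)%nat -> (1 <= j)%nat ->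
  bigO_inv (fun n => mom2 lam k l i j n - x i * x j).
Proof.
  intros Hi Hj; pose proof INR_k_ge1.
  assert (Hh : bigO_inv (fun n => hn lam k l i j n / (INR n * INR k))).
  { eapply ev_bounded_ext;
      [| apply (ev_bounded_mul _ _ (ev_bounded_const (/ INR k)) (cv_ev_bounded _ _ (hn_cv i j Hi Hj)))].
    exists 1%nat; intros n Hn; assert (0 < INR n) by (apply lt_0_INR; lia); field; lra. }
  assert (Hxj : ev_bounded (fun n => xn lam k l j n)).
  { eapply ev_bounded_ext;
      [| apply (ev_bounded_add _ _ (bigO_inv_ev_bounded _ (xn_bigO j)) (ev_bounded_const (x j)))].
    exists 0%nat; intros; ring. }
  eapply ev_bounded_ext; [| apply (bigO_inv_add _ _ Hh (bigO_inv_add _ _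
      (bigO_inv_mul _ _ Hxj (xn_bigO i)) (bigO_inv_scal (x i) _ (xn_bigO j))))].
  exists 1%nat; intros n Hn; rewrite mom2_decomp by exact Hn; ring.
Qed.

Lemma mom2_expansion i j : (1 <= i)%nat -> (1 <= j)%nat ->
  Un_cv (fun n => INR n * (mom2 lam k l i j n - xn lam k l i n * xn lam k l j n
                           - hlim i j / (INR n * INR k))) 0.
Proof.
  intros Hi Hj; pose proof INR_k_ge1.
  pose proof (cv_scal (/ INR k) _ _ (CV_minus _ _ _ _ (hn_cv i j Hi Hj) (cv_const (hlim i j)))) as Hcv.
  rewrite Rminus_diag, Rmult_0_r in Hcv; eapply cv_ext_ev; [| exact Hcv].
  exists 1%nat; intros n Hn; assert (1 <= INR n) by (apply (le_INR 1); lia).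
  rewrite mom2_decomp by exact Hn; field; lra.
Qed.
End Model.

Theorem lemma1 (lam : R) (k l : nat) (hlam : 0 < lam) (hk : (1 <= k)%nat)
  (hlk : lam <= INR (k + l)) :
  let alpha := INR k / lam in
  (forall i : nat, (1 <= i)%nat ->
     exists C N : R, forall n : nat, N <= INR n ->
       Rabs (xn lam k l i n - xlim alpha i) <= C / INR n) /\
  (forall i j : nat, (1 <= i)%nat -> (1 <= j)%nat ->
     exists C N : R, forall n : nat, N <= INR n ->
       Rabs (mom2 lam k l i j n - xlim alpha i * xlim alpha j) <= C / INR n) /\
  (exists h : nat -> nat -> R,
     (forall i j : nat, (1 <= i)%nat -> (1 <= j)%nat ->
        Un_cv (fun n => hn lam k l i j n) (h i j)) /\
     (forall i j : nat, (1 <= i)%nat -> (1 <= j)%nat -> h i j = h j i) /\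
     (forall j : nat, h O j = 0 /\ h j O = 0) /\
     (forall i : nat, (1 <= i)%nat ->
        h i i = (2 * INR (i - 1) * h i (i - 1)%nat + INR i * xlim alpha i
                 + INR (i - 1) * xlim alpha (i - 1)) / (2 * INR i + 1 + alpha)) /\
     (forall i : nat, (1 <= i)%nat ->
        h i (i + 1)%nat = (INR (i - 1) * h (i - 1)%nat (i + 1)%nat + INR i * h i i
                           - INR i * xlim alpha i) / (2 * INR i + 2 + alpha)) /\
     (forall i r : nat, (1 <= i)%nat -> (i + 2 <= r)%nat ->
        h i r = (INR (i - 1) * h (i - 1)%nat r + INR (r - 1) * h i (r - 1)%nat)
                / (INR i + INR r + 1 + alpha)) /\
     (forall i j : nat, (1 <= i)%nat -> (1 <= j)%nat ->
        Un_cv (fun n => INR n * (mom2 lam k l i j n - xn lam k l i n * xn lam k l j n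
                                 - h i j / (INR n * INR k))) 0)).
Proof.
  intro alpha; split; [| split].
  - intros i _; apply bigO_inv_rate, xn_bigO; assumption.
  - intros i j Hi Hj; apply bigO_inv_rate, mom2_bigO; assumption.
  - exists (hlim lam k l); repeat split.
    + intros; apply hn_cv; assumption.
    + intros; apply hlim_sym; assumption.
    + destruct j; reflexivity.
    + intros i Hi; apply hlim_diag; assumption.
    + intros i Hi; apply hlim_super; assumption.
    + intros i r Hi Hr; apply hlim_far; assumption.
    + intros i j Hi Hj; apply mom2_expansion; assumption.
Qed.
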